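(* Let $m,n,p,c$ be positive integers. The number of lattice paths from $(0,0)$ to $(m-pn,m+n)$ using the steps $(1,1)$ and $(-p,1)$ in the plane that intersect the line $x=c$ equals $$\sum_{\substack{s=c\\ s\equiv c \pmod{p+1}}}^{c+\lfloor\frac{m+n-c}{p+1}\rfloor(p+1)}\frac{c}{s}\binom{s}{\frac{s-c}{p+1}}\binom{m+n-s}{n-\frac{s-c}{p+1}}.$$
   Context: A path with steps $(1,1)$ and $(-p,1)$ is regarded as the polygonal curve formed by its steps; it intersects the line $x=c$ if it touches or crosses that line. $\lfloor x\rfloor$ is the floor function. Binomial coefficients $\binom{N}{j}$ with $N\ge0$ equal $0$ when $j<0$ or $j>N$. *)

From mathcomp Require Import all_boot all_order all_algebra.
Set Implicit Arguments. Unset Strict Implicit. Unset Printing Implicit Defensive.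
Import Order.TTheory GRing.Theory Num.Theory.
Local Open Scope ring_scope.

(* A path with N steps is encoded as an N-tuple of booleans:
   true = step (1,1), false = step (-p,1).  Vertex k (0 <= k <= N) has
   coordinates (xpos p s k, k). *)
Definition step_x (p : nat) (b : bool) : int := if b then 1 else - (p%:Z).

Definition xpos (p : nat) (s : seq bool) (k : nat) : int :=
  \sum_(i < k) step_x p (nth false s i).

Definition path_meets_line (p : nat) (s : seq bool) (c : int) : bool :=
  [exists k : 'I_(size s).+1, xpos p s k == c] ||
  [exists k : 'I_(size s),
     ((xpos p s k <= c) && (c <= xpos p s k.+1)) ||
     ((xpos p s k.+1 <= c) && (c <= xpos p s k))].

Definition binz (N : nat) (k : int) : nat :=
  if (k < 0)%R then 0%N else 'C(N, `|k|%N).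

Definition paths_meeting (m n p c : nat) : {set (m + n).-tuple bool} :=
  [set s : (m + n).-tuple bool |
     (xpos p s (m + n) == (m%:Z - (p * n)%N%:Z)) && path_meets_line p s c%:Z].

Definition sum_upper (m n p c : nat) : int :=
  c%:Z + ((((m + n)%N%:Z - c%:Z) %/ (p.+1)%:Z)%Z * (p.+1)%:Z).

Definition rhs_sum (m n p c : nat) : rat :=
  \sum_(c <= s < `|sum_upper m n p c|%N.+1 |
          (s%:Z <= sum_upper m n p c) && (s == c %[mod p.+1]))
     ((c%:R / s%:R) * ('C(s, (s - c) %/ p.+1))%:R
       * (binz (m + n - s) (n%:Z - ((s - c) %/ p.+1)%N%:Z))%:R).

From mathcomp Require Import all_boot all_order all_algebra.
From mathcomp Require Import zify ring.
Import Order.TTheory GRing.Theory Num.Theory.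
Local Open Scope ring_scope.

(* Track the distance d from the current vertex to the line x = c.  A step
   (1,1) lowers d by one, so by a discrete intermediate value argument a path
   meets the line iff d reaches 0.  Counting paths with L steps, n of them
   (-p,1), that reach 0 from distance d gives a Pascal-type recursion in
   (L, d, n).  It is solved by splitting at the first passage through the
   line: the first passage happens after d + k(p+1) steps of which k are
   (-p,1), in [d/(d + k(p+1)) C(d + k(p+1), k)] ways (a generalized ballot
   number), after which the path is arbitrary. *)

Lemma xpos0 p s : xpos p s 0 = 0.
Proof. by rewrite /xpos big_ord0. Qed.

Lemma xposS p s k : xpos p s k.+1 = xpos p s k + step_x p (nth false s k).
Proof. by rewrite /xpos big_ord_recr. Qed.

Lemma xpos_cons p b s k : xpos p (b :: s) k.+1 = step_x p b + xpos p s k.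
Proof. by rewrite /xpos big_ord_recl. Qed.

Lemma count_true_false (s : seq bool) :
  (count_mem true s + count_mem false s = size s)%N.
Proof.
rewrite -(count_predC (pred1 true) s); congr (_ + _)%N.
by apply: eq_count => -[].
Qed.

Lemma xpos_size p s :
  xpos p s (size s) = (count_mem true s)%:Z - (p * count_mem false s)%N%:Z.
Proof.
elim: s => [|b s IH]; first by rewrite /= xpos0 muln0.
rewrite /= xpos_cons IH /step_x; case: b => /=;
  move: (count_mem true s) (count_mem false s) => u f;
  rewrite ?add0n ?add1n ?mulnS; lia.
Qed.

Lemma xpos_ivt {p s} {c : int} {k} : 0 <= c -> c <= xpos p s k ->
  exists2 j, (j <= k)%N & xpos p s j = c.
Proof.
move=> c_ge0; elim: k => [|k IH].
  by rewrite xpos0 => c_le0; exists 0%N => //; rewrite xpos0; lia.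
have [xkc|xkc] := eqVneq (xpos p s k.+1) c; first by move=> _; exists k.+1.
move=> c_le; have [|j le_jk xjc] := IH; last by exists j => //; apply: leqW.
by move: xkc c_le; rewrite xposS /step_x; case: (nth false s k) => /=; lia.
Qed.

Definition dist_step (p d : nat) (b : bool) : nat :=
  if d is d'.+1 then (if b then d' else d + p)%N else 0%N.

Fixpoint hits_line (p d : nat) (s : seq bool) : bool :=
  if d is 0 then true else
  if s is b :: s' then hits_line p (dist_step p d b) s' else false.

Lemma hits_line_cons p d b s :
  hits_line p d (b :: s) = hits_line p (dist_step p d b) s.
Proof. by case: d => //; case: s. Qed.

Lemma hits_lineP p d s :
  reflect (exists2 k, (k <= size s)%N & xpos p s k = d%:Z) (hits_line p d s).
Proof.
elim: s d => [|b s IH] [|d]; try by left; exists 0%N => //; rewrite xpos0.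
  by right; case=> k; rewrite leqn0 => /eqP ->; rewrite xpos0.
rewrite hits_line_cons; apply: (iffP (IH _)) => -[k le_k xk].
  by exists k.+1 => //; rewrite xpos_cons xk /step_x; move: xk; case: b => /=; lia.
case: k le_k xk => [|k] le_k; first by rewrite xpos0.
by exists k => //; move: xk; rewrite xpos_cons /step_x; clear le_k; case: b => /=; lia.
Qed.

Lemma path_meets_lineE p s c : path_meets_line p s c%:Z = hits_line p c s.
Proof.
apply/idP/hits_lineP => [|[k le_k xk]]; last first.
  apply/orP; left; apply/existsP.
  by exists (Ordinal (le_k : (k < (size s).+1)%N)); rewrite xk.
case/orP => [/existsP[k /eqP xk]|/existsP[k /orP[]/andP[_ c_le]]].
- by exists k; rewrite // -ltnS.
- have [j le_j xj] := xpos_ivt (le0z_nat c) c_le.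
  by exists j => //; exact: leq_trans le_j (ltn_ord k).
- have [j le_j xj] := xpos_ivt (le0z_nat c) c_le.
  by exists j => //; exact: leq_trans le_j (ltnW (ltn_ord k)).
Qed.

Lemma card_tuple_cons {L} (P : seq bool -> bool) :
  #|[set t : L.+1.-tuple bool | P t]| =
  (#|[set t : L.-tuple bool | P (true :: t)]| +
   #|[set t : L.-tuple bool | P (false :: t)]|)%N.
Proof.
have card_head b : #|[set t : L.-tuple bool | P (b :: t)]| =
                   #|[set t : L.+1.-tuple bool | P t && (thead t == b)]|.
  rewrite -(card_imset _ (f := fun t : L.-tuple bool => [tuple of b :: t])).
    apply: eq_card => t; rewrite inE; apply/imsetP/idP.
      by case=> u; rewrite inE => Pu ->; rewrite theadE eqxx andbT.
    case/andP=> Pt /eqP tb; exists [tuple of behead t]; last first.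
      by rewrite {1}(tuple_eta t) tb.
    by rewrite inE; move: Pt; rewrite {1}(tuple_eta t) tb.
  by move=> u v /(congr1 val) [] /val_inj.
rewrite !card_head -(cardsID [set t : L.+1.-tuple bool | thead t]).
by congr (_ + _)%N; apply: eq_card => t; rewrite !inE ?eqb_id // eqbF_neg andbC.
Qed.

Fixpoint nhits (p L d n : nat) : nat :=
  if L is L'.+1 then
    (nhits p L' (dist_step p d true) n +
     (if n is n'.+1 then nhits p L' (dist_step p d false) n' else 0))%N
  else ((d == 0) && (n == 0))%N.

Lemma nhits_card p L d n :
  nhits p L d n =
  #|[set t : L.-tuple bool | hits_line p d t && (count_mem false t == n)]|.
Proof.
elim: L d n => [|L IH] d n.
  rewrite /= (_ : [set t : 0.-tuple bool | _] =
               if (d == 0) && (n == 0) then setT else set0).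
    by case: ifP => _; rewrite ?cardsT ?card_tuple ?cards0.
  by apply/setP => t; rewrite tuple0; case: d n => [|d] [|n]; rewrite /= !inE.
rewrite /= IH (card_tuple_cons (fun s => hits_line p d s && (count_mem false s == n))).
congr (_ + _)%N.
  by apply: eq_card => t; rewrite !inE hits_line_cons /= add0n.
case: n => [|n]; last by rewrite IH; apply: eq_card => t; rewrite !inE hits_line_cons.
rewrite (_ : [set t : L.-tuple bool | _] = set0) ?cards0 //.
by apply/setP => t; rewrite !inE /= add1n andbF.
Qed.

Lemma nhits0 p L n : nhits p L 0 n = 'C(L, n).
Proof. by elim: L n => [|L IH] [|n] //=; rewrite !IH ?addn0 ?bin0. Qed.

(* Written as a difference so that Pascal's rule gives [ballotSS]; for d > 0
   it equals d/(d + k(p+1)) C(d + k(p+1), k), see [ballotE]. *)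
Definition ballot (p d k : nat) : rat :=
  if k is k'.+1 then
    ('C(d + k * p.+1, k))%:R - (p.+1)%:R * ('C((d + k * p.+1).-1, k'))%:R
  else 1.

Lemma ballot0S p k : ballot p 0 k.+1 = 0.
Proof.
rewrite /ballot add0n -natrM; apply/eqP; rewrite subr_eq0 eqr_nat.
by rewrite -(eqn_pmul2l (ltn0Sn k)) mulnA -mul_bin_diag mulnC.
Qed.

Lemma ballotSS p d k :
  ballot p d.+1 k.+1 = ballot p d k.+1 + ballot p (d.+1 + p) k.
Proof.
rewrite /ballot.
have : (d + k.+1 * p.+1)%N = (d + k * p.+1 + p).+1 by rewrite mulSn; lia.
move: (d + k * p.+1 + p)%N => S eS.
have -> : (d.+1 + k.+1 * p.+1 = S.+2)%N by rewrite addSn eS.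
rewrite eS; case: k eS => [|k] eS.
  by rewrite /= !bin1 !bin0 -[S.+2]addn1 -[S.+1]addn1 !natrD; ring.
have -> : (d.+1 + p + k.+1 * p.+1 = S.+1)%N by rewrite -eS mulSn (mulSn k.+1); lia.
by rewrite /= (binS S.+1 k.+1) (binS S k) !natrD; ring.
Qed.

Lemma ballotE p d k : (0 < d)%N ->
  ballot p d k = d%:R / (d + k * p.+1)%N%:R * ('C(d + k * p.+1, k))%:R.
Proof.
move=> d_gt0; case: k => [|k].
  by rewrite /ballot mul0n addn0 bin0 mulr1 divff // pnatr_eq0 -lt0n.
rewrite /ballot; set s := (d + k.+1 * p.+1)%N.
have s_neq0 : (s%:R : rat) != 0 by rewrite pnatr_eq0 /s; lia.
have -> : (('C(s.-1, k))%:R : rat) = k.+1%:R * ('C(s, k.+1))%:R / s%:R.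
  by apply: (mulIf s_neq0); rewrite mulfVK // -!natrM -mul_bin_diag mulnC.
have sE : (s%:R : rat) = d%:R + k.+1%:R * p.+1%:R by rewrite /s natrD natrM.
move: s_neq0; rewrite sE => s_neq0; field.
by rewrite !(addrC 1) !natr1 -natrM -natrD pnatr_eq0; lia.
Qed.

(* Paths whose first passage through the line uses k steps (-p,1). *)
Definition hit_term (p L d n k : nat) : rat :=
  if (d + k * p.+1 <= L)%N then
    ballot p d k * (if (k <= n)%N then ('C(L - (d + k * p.+1), n - k))%:R else 0)
  else 0.

Lemma hit_termSS p L d n k :
  hit_term p L.+1 d.+1 n k = hit_term p L d n k +
    (if k is k'.+1 then (if n is n'.+1 then hit_term p L (d.+1 + p) n' k' else 0)
     else 0).
Proof.
case: k => [|k]; first by rewrite /hit_term /= !mul0n !addn0 addr0 ltnS subSS.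
rewrite /hit_term ballotSS addSn ltnS subSS; case: n => [|n].
  by case: ifP => _; rewrite ?mulr0 ?addr0.
have -> : (d.+1 + p + k * p.+1 = d + k.+1 * p.+1)%N by rewrite mulSn; lia.
by case: ifP => _; rewrite ?addr0 // mulrDl.
Qed.

Lemma nhitsE p L d n : (nhits p L d n)%:R = \sum_(k < L.+1) hit_term p L d n k.
Proof.
elim: L d n => [|L IH] d n.
  by rewrite big_ord1 /hit_term /=; case: d n => [|d] [|n].
case: d => [|d].
  rewrite nhits0 big_ord_recl {1}/hit_term mul0n addn0 subn0 !leq0n mul1r subn0.
  by rewrite big1 ?addr0 // => i _; rewrite /hit_term lift0 ballot0S mul0r; case: ifP.
rewrite /= natrD IH.
under eq_bigr => k _ do rewrite hit_termSS.
rewrite big_split [in RHS](big_ord_recr L.+1) [X in _ = _ + X + _]/hit_term.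
rewrite ifF ?addr0; last by apply/negbTE; rewrite -ltnNge /=; nia.
congr (_ + _); case: n => [|n]; first by rewrite big1 // => i _; case: (nat_of_ord i).
by rewrite IH [RHS]big_ord_recl /= add0r.
Qed.

Lemma sum_hit_term_trunc p L d n : (d <= L)%N ->
  \sum_(k < L.+1) hit_term p L d n k =
  \sum_(k < ((L - d) %/ p.+1).+1) hit_term p L d n k.
Proof.
move=> dL; set K := ((L - d) %/ p.+1)%N.
rewrite (bigID (fun k : 'I_L.+1 => (k < K.+1)%N)) /= [X in _ + X]big1 ?addr0.
  by rewrite -big_ord_widen //; have := leq_divM (L - d) p.+1; nia.
move=> k; rewrite -leqNgt => Kk; rewrite /hit_term ifF //; apply/negbTE.
have : (K.+1 * p.+1 <= k * p.+1)%N by rewrite leq_mul2r Kk orbT.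
by have := ltn_ceil (L - d) (ltn0Sn p); rewrite -/K -ltnNge; lia.
Qed.

Lemma sum_hit_term_nil p L d n : (L < d)%N ->
  \sum_(k < L.+1) hit_term p L d n k = 0.
Proof. by move=> Ld; apply: big1 => k _; rewrite /hit_term ifF //; lia. Qed.

Lemma card_paths_meeting m n p c :
  #|paths_meeting m n p c| = nhits p (m + n) c n.
Proof.
rewrite nhits_card; apply: eq_card => t.
rewrite !inE path_meets_lineE andbC; congr (_ && _).
have := xpos_size p t; have := count_true_false t; rewrite size_tuple => + ->.
by move: (count_mem true t) (count_mem false t) => u f ?; apply/eqP/eqP; nia.
Qed.

Lemma sum_dvdn_reindex (G : nat -> rat) q K : (0 < q)%N ->
  \sum_(0 <= t < K * q + 1 | (q %| t)%N) G t = \sum_(k < K.+1) G (k * q)%N.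
Proof.
case: q => [|q] // _; elim: K => [|K IH].
  by rewrite mul0n add0n big_mkcond big_nat1 dvdn0 big_ord1 mul0n.
rewrite (@big_cat_nat _ _ _ (K * q.+1 + 1)%N) //=; last first.
  by rewrite leq_add2r leq_mul2r ltnW ?orbT.
rewrite IH [in RHS]big_ord_recr /=; congr (_ + _).
have -> : (K.+1 * q.+1 + 1 = (K * q.+1 + 1 + q).+1)%N by rewrite mulSn; lia.
rewrite big_mkcond big_nat_recr /= ?leq_addr //.
rewrite big_nat_cond big1 ?add0r; last first.
  move=> t /andP [/andP [Kt tK] _]; case: ifP => // q_t.
  have : (q.+1 %| (t - K * q.+1))%N by rewrite dvdn_subr ?q_t ?dvdn_mull //; lia.
  by move/dvdn_leq; lia.
have -> : (K * q.+1 + 1 + q = K.+1 * q.+1)%N by rewrite mulSn; lia.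
by rewrite dvdn_mull.
Qed.

Lemma sum_mod_reindex (G : nat -> rat) c q K : (0 < q)%N ->
  \sum_(c <= s < (c + K * q).+1 |
        (s%:Z <= (c + K * q)%N%:Z) && (s == c %[mod q])) G s =
  \sum_(k < K.+1) G (c + k * q)%N.
Proof.
move=> q_gt0; rewrite (big_addn 0 _ c).
have -> : ((c + K * q).+1 - c = K * q + 1)%N by lia.
under [RHS]eq_bigr => k _ do rewrite addnC.
rewrite -(sum_dvdn_reindex (fun t => G (t + c)%N)) //.
rewrite big_nat_cond [RHS]big_nat_cond; apply: eq_bigl => t.
case: (boolP (0 <= t < K * q + 1)%N) => //= tK.
rewrite lez_nat (_ : (t + c <= c + K * q)%N = true); last by lia.
by rewrite /= -{2}(add0n c) eqn_modDr mod0n.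
Qed.

Lemma sum_upperE m n p c : (c <= m + n)%N ->
  sum_upper m n p c = (c + ((m + n - c) %/ p.+1) * p.+1)%N%:Z.
Proof. by move=> cL; rewrite /sum_upper subzn // divz_nat PoszD PoszM. Qed.

Lemma sum_upper_le m n p c : sum_upper m n p c <= (m + n)%N%:Z.
Proof.
rewrite /sum_upper; set x := ((m + n)%N%:Z - c%:Z).
have := divz_eq x (p.+1)%:Z; have := @modz_ge0 x (p.+1)%:Z isT.
by rewrite /x; move: (_ * _)%R (_ %% _)%Z; lia.
Qed.

Lemma rhs_sum_nil m n p c : (m + n < c)%N -> rhs_sum m n p c = 0.
Proof.
move=> Lc; rewrite /rhs_sum big_nat_cond big1 // => s.
case/andP => /andP [cs _] /andP [su _].
have := sum_upper_le m n p c; move: su; rewrite -lez_nat in cs; rewrite -ltz_nat in Lc.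
by move: Lc cs (sum_upper m n p c) => + + U; move: (s%:Z) (c%:Z) ((m + n)%N%:Z); lia.
Qed.

Lemma rhs_sumE m n p c : (0 < c)%N -> (c <= m + n)%N ->
  rhs_sum m n p c = \sum_(k < ((m + n - c) %/ p.+1).+1) hit_term p (m + n) c n k.
Proof.
move=> c_gt0 cL; rewrite /rhs_sum sum_upperE // absz_nat sum_mod_reindex //.
apply: eq_bigr => k _; rewrite addKn mulnK //.
have kL : (c + k * p.+1 <= m + n)%N.
  have : (k * p.+1 <= (m + n - c) %/ p.+1 * p.+1)%N.
    by rewrite leq_mul2r -ltnS ltn_ord orbT.
  by have := leq_divM (m + n - c) p.+1; lia.
rewrite /hit_term kL ballotE //; congr (_ * _); rewrite /binz.
have [kn|nk] := leqP k n; first by rewrite subzn // absz_nat.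
by rewrite ifT // subr_lt0 ltz_nat.
Qed.

Theorem corollary3p1 (m n p c : nat) (hm : (0 < m)%N) (hn : (0 < n)%N)
  (hp : (0 < p)%N) (hc : (0 < c)%N) :
  (#|paths_meeting m n p c|%:R : rat) = rhs_sum m n p c.
Proof.
rewrite card_paths_meeting nhitsE.
have [cL|Lc] := leqP c (m + n).
  by rewrite sum_hit_term_trunc // rhs_sumE.
by rewrite sum_hit_term_nil // rhs_sum_nil.
Qed.
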